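(* Let $d_{\mathrm{in}},d_{\mathrm{out}}\ge1$, $\lambda\in\mathbb{R}^{d_{\mathrm{in}}}$, $\eta,\alpha,\tau\in\mathbb{R}$, for each $q\in\{0,\dots,d_{\mathrm{out}}-1\}$ a neighborhood set $\mathcal N(q)\subseteq\{0,\dots,d_{\mathrm{out}}-1\}$ and real weights $\omega_{qj}$, $j\in\mathcal N(q)$. Fix $B_{\mathrm{in}}>0$ and let $\mathcal B_{\mathrm{in}}=[-B_{\mathrm{in}},B_{\mathrm{in}}]^{d_{\mathrm{in}}}$. Let $$I_\phi=[-B_{\mathrm{in}}-|\eta|(d_{\mathrm{out}}-1),\,B_{\mathrm{in}}+|\eta|(d_{\mathrm{out}}-1)],\quad M_\phi=\|\phi\|_{L^\infty(I_\phi)},$$ $$B_\omega=\sup_q\sum_{j\in\mathcal N(q)}|\omega_{qj}|,\quad R_{\mathrm{mix}}=1+|\tau|B_\omega,\quad M_s=\|\lambda\|_1M_\phi+|\alpha|(d_{\mathrm{out}}-1),\quad I_\Phi=[-R_{\mathrm{mix}}M_s,\,R_{\mathrm{mix}}M_s].$$ Assume $\phi$ is $C^2$ on a neighborhood of $I_\phi$ and $\Phi$ is $C^2$ on a neighborhood of $I_\Phi$. For $\mathbf z\in\mathcal B_{\mathrm{in}}$ define $s_q(\mathbf z)=\sum_{i=1}^{d_{\mathrm{in}}}\lambda_i\phi(z_i+\eta q)+\alpha q$, $\tilde s_q=s_q+\tau\sum_{j\in\mathcal N(q)}\omega_{qj}s_j$, and $[T(\mathbf z)]_q=\Phi(\tilde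 s_q(\mathbf z))$. Let $\hat\phi$ be the piecewise-linear interpolant of $\phi$ on a uniform grid of $G_\phi\ge2$ knots over $I_\phi$, $\hat\Phi$ the piecewise-linear interpolant of $\Phi$ on a uniform grid of $G_\Phi\ge2$ knots over $I_\Phi$, and $\hat T$ the map defined as $T$ with $(\phi,\Phi)$ replaced by $(\hat\phi,\hat\Phi)$ (same $\lambda,\eta,\alpha,\tau,\omega,\mathcal N$). Put $h_\phi=|I_\phi|/(G_\phi-1)$, $h_\Phi=|I_\Phi|/(G_\Phi-1)$, $M_{\phi''}=\|\phi''\|_{L^\infty(I_\phi)}$, $M_{\Phi''}=\|\Phi''\|_{L^\infty(I_\Phi)}$, $L_\Phi=\|\Phi'\|_{L^\infty(I_\Phi)}$, $\delta_\phi=\frac{M_{\phi''}}8h_\phi^2$, $\delta_\Phi=\frac{M_{\Phi''}}8h_\Phi^2$. Then for all $\mathbf z\in\mathcal B_{\mathrm{in}}$, $$\|T(\mathbf z)-\hat T(\mathbf z)\|_\infty\le L_\Phi R_{\mathrm{mix}}\|\lambda\|_1\delta_\phi+\delta_\Phi\le K_T\max\{h_\phi^2,h_\Phi^2\},\quad K_T=\tfrac18\bigl(L_\Phi R_{\mathrm{mix}}\|\lambda\|_1M_{\phi''}+M_{\Phi''}\bigr).$$ Moreover, if $R:\mathbb{R}^{d_{\mathrm{in}}}\to\mathbb{R}^{d_{\mathrm{out}}}$ is any map and $T_{\mathrm{res}}=T+R$, $\hat T_{\mathrm{res}}=\hat T+R$, the same bounds hold for $\|T_{\mathrm{res}}(\mathbf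 z)-\hat T_{\mathrm{res}}(\mathbf z)\|_\infty$.
   Context: This describes a single Sprecher block with optional lateral mixing: the output channels are indexed $q=0,\dots,d_{\mathrm{out}}-1$, $\|\lambda\|_1=\sum_i|\lambda_i|$, and $|I|$ denotes the length of an interval $I$. *)

From HB Require Import structures.
From mathcomp Require Import all_boot all_order all_algebra.
From mathcomp Require Import all_classical all_reals all_analysis.
Set Implicit Arguments. Unset Strict Implicit. Unset Printing Implicit Defensive.
Import Order.TTheory GRing.Theory Num.Theory.
Import numFieldNormedType.Exports.
Local Open Scope classical_set_scope.
Local Open Scope ring_scope.

Section SprecherDefs.
Variable R : realType.

Definition C2_near (f : R -> R) (a b : R) : Prop :=
  exists e : R, 0 < e /\
    forall x : R, a - e < x -> x < b + e ->
      [/\ derivable f x 1, derivable (derive1 f) x 1 & {for x, continuous (derive1n 2 f)}].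

(* sup-norm of f over the compact interval [a,b] (= L^oo norm for continuous f) *)
Definition supnorm (f : R -> R) (a b : R) : R :=
  sup [set `|f x| | x in `[a, b]].

(* piecewise-linear interpolant of f on the uniform grid of G knots
   a = x_0 < ... < x_{G-1} = b, x_k = a + k h, h = (b-a)/(G-1).
   On [x_k, x_{k+1}] it is the chord of f between the two knots
   (outside [a,b] the first/last chord is extended linearly). *)
Definition pl_interp (f : R -> R) (a b : R) (G : nat) (x : R) : R :=
  let h := (b - a) / (G - 1)%:R in
  let k := minn (G - 2) (Num.truncn ((x - a) / h)) in
  let xk := a + k%:R * h in
  f xk + (x - xk) / h * (f (xk + h) - f xk).

Definition l1norm (n : nat) (v : 'I_n -> R) : R := \sum_(i < n) `|v i|.

Definition infnorm (n : nat) (v : 'I_n -> R) : R := \big[Num.max/0]_(i < n) `|v i|.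

Variables (din dout : nat).

Definition s_pre (phi : R -> R) (lam : 'I_din -> R) (eta alpha : R)
    (z : 'I_din -> R) (q : 'I_dout) : R :=
  \sum_(i < din) lam i * phi (z i + eta * (q : nat)%:R) + alpha * (q : nat)%:R.

Definition s_mix (phi : R -> R) (lam : 'I_din -> R) (eta alpha tau : R)
    (N : 'I_dout -> {set 'I_dout}) (omega : 'I_dout -> 'I_dout -> R)
    (z : 'I_din -> R) (q : 'I_dout) : R :=
  s_pre phi lam eta alpha z q
  + tau * \sum_(j in N q) omega q j * s_pre phi lam eta alpha z j.

Definition Tblock (phi Phi : R -> R) (lam : 'I_din -> R) (eta alpha tau : R)
    (N : 'I_dout -> {set 'I_dout}) (omega : 'I_dout -> 'I_dout -> R)
    (z : 'I_din -> R) : 'I_dout -> R :=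
  fun q => Phi (s_mix phi lam eta alpha tau N omega z q).

End SprecherDefs.

From HB Require Import structures.
From mathcomp Require Import all_boot all_order all_algebra.
From mathcomp Require Import all_classical all_reals all_analysis.
From mathcomp Require Import ring lra zify.
Set Implicit Arguments. Unset Strict Implicit. Unset Printing Implicit Defensive.
Import Order.TTheory GRing.Theory Num.Theory.
Import numFieldNormedType.Exports.
Local Open Scope classical_set_scope.
Local Open Scope ring_scope.

(* On a cell of length [h] the chord of a C^2 function [f] is within
   [sup |f''| h^2 / 8] of [f], and, being a convex combination of two values of
   [f], it is bounded by [sup |f|].  Hence replacing [phi] by its interpolant
   moves each [s_q] by at most [|lam|_1 delta_phi] while keeping
   [|s_q| <= M_s]; lateral mixing multiplies both the size and the
   perturbation by at most [R_mix], so both mixed sums lie in [I_Phi].  There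
   [Phi] is [L_Phi]-Lipschitz by the mean value theorem and within [delta_Phi]
   of its interpolant.  The residual map cancels in the difference. *)

Section SupNorm.
Variable R : realType.
Implicit Types (f : R -> R) (a b x : R).

Lemma supnorm_ge f a b x : {within `[a, b], continuous f} -> a <= x <= b ->
  `|f x| <= supnorm f a b.
Proof.
move=> cf xab; have ab : a <= b by case/andP: xab => ax /(le_trans ax).
have cnf : {within `[a, b], continuous (fun t => `|f t|)}.
  by move=> t; apply: continuous_comp; [exact: cf | exact: norm_continuous].
have [c _ cmax] := EVT_max ab cnf.
apply: ub_le_sup; last by exists x; rewrite //= in_itv.
by exists `|f c| => _ [t tab <-]; exact: cmax.
Qed.

Lemma supnorm_ge0 f a b : a <= b -> {within `[a, b], continuous f} ->
  0 <= supnorm f a b.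
Proof.
by move=> ab cf; apply: le_trans (normr_ge0 (f a)) (supnorm_ge cf _); rewrite lexx.
Qed.

End SupNorm.

Section Norms.
Variable R : realType.

Lemma infnorm_le n (v : 'I_n -> R) c : (0 < n)%N -> (forall i, `|v i| <= c) ->
  infnorm v <= c.
Proof.
move=> n0 vc; apply: bigmax_le => [|i _]; last exact: vc.
exact: le_trans (normr_ge0 _) (vc (Ordinal n0)).
Qed.

Lemma l1norm_ge0 n (v : 'I_n -> R) : 0 <= l1norm v.
Proof. by apply: sumr_ge0 => i _. Qed.

Lemma mulr_addr_le_max (A B x y : R) : 0 <= A -> 0 <= B ->
  A * x + B * y <= (A + B) * Num.max x y.
Proof.
by move=> A0 B0; rewrite mulrDl lerD // ler_wpM2l // le_max lexx ?orbT.
Qed.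

Lemma interp_err_sum_le_max (C M1 M2 h1 h2 : R) : 0 <= C -> 0 <= M1 -> 0 <= M2 ->
  C * (M1 / 8 * h1 ^+ 2) + M2 / 8 * h2 ^+ 2
    <= (C * M1 + M2) / 8 * Num.max (h1 ^+ 2) (h2 ^+ 2).
Proof.
move=> C0 M10 M20; rewrite mulrA mulrA mulrDl.
by apply: mulr_addr_le_max; rewrite ?mulr_ge0 ?invr_ge0.
Qed.

Lemma shift_mem_itv (B eta x : R) (n k : nat) : `|x| <= B -> (k < n)%N ->
  - B - `|eta| * (n - 1)%:R <= x + eta * k%:R <= B + `|eta| * (n - 1)%:R.
Proof.
move=> xB kn; have : `|eta * k%:R| <= `|eta| * (n - 1)%:R.
  by rewrite normrM normr_nat ler_wpM2l // ler_nat; lia.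
by move: xB; rewrite !ler_norml => /andP[? ?] /andP[? ?]; apply/andP; split; lra.
Qed.

End Norms.

Section C2.
Variable R : realType.
Implicit Types (f : R -> R) (a b c d x y : R).

Definition C2_on f a b := forall x, a <= x <= b ->
  [/\ derivable f x 1, derivable (derive1 f) x 1 & {for x, continuous (derive1n 2 f)}].

Lemma C2_near_on f a b : C2_near f a b -> C2_on f a b.
Proof.
move=> [e [e0 fC2]] x /andP[ax xb]; apply: fC2.
  by rewrite ltrBlDr (le_lt_trans ax) // ltrDl.
by rewrite (le_lt_trans xb) // ltrDl.
Qed.

Lemma C2_on_sub f a b c d : C2_on f a b -> a <= c -> d <= b -> C2_on f c d.
Proof.
by move=> fC2 ac db x /andP[cx xd]; apply: fC2; rewrite (le_trans ac cx) (le_trans xd db).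
Qed.

Lemma C2_on_continuous f a b : C2_on f a b -> {within `[a, b], continuous f}.
Proof.
move=> fC2; apply: derivable_within_continuous => x; rewrite in_itv /= => xab.
by case: (fC2 x xab).
Qed.

Lemma C2_on_continuous_derive1 f a b : C2_on f a b ->
  {within `[a, b], continuous (derive1 f)}.
Proof.
move=> fC2; apply: derivable_within_continuous => x; rewrite in_itv /= => xab.
by case: (fC2 x xab).
Qed.

Lemma C2_on_continuous_derive2 f a b : C2_on f a b ->
  {within `[a, b], continuous (derive1n 2 f)}.
Proof.
move=> fC2; apply: continuous_in_subspaceT => x; rewrite inE /= in_itv /= => xab.
by case: (fC2 x xab).
Qed.

Lemma lipschitz_supnorm_derive1 f a b x y :
  (forall t, a <= t <= b -> derivable f t 1) -> {within `[a, b], continuous (derive1 f)} ->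
  a <= x <= b -> a <= y <= b -> `|f x - f y| <= supnorm (derive1 f) a b * `|x - y|.
Proof.
move=> df cdf.
wlog xy : x y / x <= y => [hwlog xab yab|/andP[ax xb] /andP[ay yb]].
  case: (leP x y) => [/hwlog|/ltW /hwlog]; first by apply.
  by rewrite distrC (distrC x); apply.
have inab t : x <= t <= y -> a <= t <= b.
  by case/andP=> xt ty; rewrite (le_trans ax xt) (le_trans ty yb).
have dfxy t : t \in `]x, y[ -> is_derive t 1 f (derive1 f t).
  rewrite in_itv /= derive1E => /andP[xt ty]; apply/derivableP/df/inab.
  by rewrite !ltW.
have cfxy : {within `[x, y], continuous f}.
  by apply: derivable_within_continuous => t; rewrite in_itv /= => /inab; exact: df.
have [c] := MVT_segment xy dfxy cfxy; rewrite in_itv /= => cxy fyx.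
rewrite distrC (distrC x) fyx normrM ler_wpM2r //.
exact/(supnorm_ge cdf)/inab.
Qed.

Lemma is_derive_Rolle (F dF : R -> R) x y : x < y ->
  (forall t, x <= t <= y -> is_derive t 1 F (dF t)) -> F x = F y ->
  exists2 c, x < c < y & dF c = 0.
Proof.
move=> xy dF0 Fxy.
have dFxy t : t \in `]x, y[ -> derivable F t 1.
  by rewrite in_itv /= => /andP[xt ty]; have [] := dF0 t; rewrite ?ltW.
have cFxy : {within `[x, y], continuous F}.
  apply: derivable_within_continuous => t; rewrite in_itv /= => txy.
  by have [] := dF0 t txy.
have [c] := Rolle xy dFxy cFxy Fxy; rewrite in_itv /= => cxy Fc0.
exists c => //; have /andP[xc cy] := cxy.
have Dc : is_derive c 1 F (dF c) by apply: dF0; rewrite !ltW.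
by rewrite -(derive_val (is_derive := Dc)) (derive_val (is_derive := Fc0)).
Qed.

Lemma is_derive_quadratic (a0 a1 a2 t : R) :
  is_derive t 1 (fun s => a0 + a1 * s + a2 * (s * s)) (a1 + a2 * (2 * t)).
Proof.
have D := is_deriveD (is_deriveD (is_derive_cst a0 t 1) (is_deriveZ a1 (is_derive_id t 1)))
  (is_deriveZ a2 (is_deriveM (is_derive_id t 1) (is_derive_id t 1))).
have -> : (fun s => a0 + a1 * s + a2 * (s * s)) = cst a0 + a1 \*: id + a2 \*: (id * id).
  by apply/funext.
apply: (is_derive_eq D).
change (0 + a1 * 1 + a2 * (t * 1 + t * 1) = a1 + a2 * (2 * t)); ring.
Qed.

End C2.

Section Chord.
Variable R : realType.
Implicit Types (f : R -> R) (u h x M : R).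

Definition chord f u h x := f u + (x - u) / h * (f (u + h) - f u).

(* [K] is chosen so that [w] vanishes at [u], [x] and [v]; Rolle's theorem
   applied twice to [w] and once to [w'] gives [f''(c) = 2 K]. *)
Lemma chord_error_formula f u h x : 0 < h -> u < x < u + h -> C2_on f u (u + h) ->
  exists2 c, u <= c <= u + h &
    f x - chord f u h x = derive1n 2 f c / 2 * ((x - u) * (x - (u + h))).
Proof.
move=> h0 /andP[ux xv] fC2; set v := u + h in xv fC2 *.
pose S := (f v - f u) / h.
pose P := (x - u) * (x - v).
have P0 : P != 0 by rewrite mulf_neq0 // subr_eq0; [rewrite gt_eqF | rewrite lt_eqF].
pose K := (f x - chord f u h x) / P.
pose w t := f t - (f u + (t - u) * S) - K * ((t - u) * (t - v)).
pose dw t := derive1 f t - S - K * (2 * t - u - v).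
have Dw t : u <= t <= v -> is_derive t 1 w (dw t).
  move=> tuv; have [df _ _] := fC2 t tuv.
  have Df : is_derive t 1 f (derive1 f t) by rewrite derive1E; exact: derivableP.
  have -> : w = f + (fun s => - f u + u * S - K * u * v + (- S + K * (u + v)) * s
                                + - K * (s * s)).
    by apply/funext => s; rewrite /w fctE; ring.
  by apply: (is_derive_eq (is_deriveD Df (is_derive_quadratic _ _ _ t))); rewrite /dw; ring.
have Ddw t : u <= t <= v -> is_derive t 1 dw (derive1n 2 f t - 2 * K).
  move=> tuv; have [_ df _] := fC2 t tuv.
  have Df' : is_derive t 1 (derive1 f) (derive1n 2 f t).
    by rewrite derive1nS derive1n1 derive1E; exact: derivableP.
  have -> : dw = derive1 f + (fun s => - S + K * (u + v) + - (2 * K) * s + 0 * (s * s)).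
    by apply/funext => s; rewrite /dw fctE; ring.
  by apply: (is_derive_eq (is_deriveD Df' (is_derive_quadratic _ _ _ t))); ring.
have wu : w u = 0 by rewrite /w; ring.
have wv : w v = 0 by rewrite /w /S /v; field; rewrite gt_eqF.
have wx : w x = 0.
  rewrite /w /K -/P.
  have -> : f x - (f u + (x - u) * S) = f x - chord f u h x.
    by rewrite /chord /S; field; rewrite gt_eqF.
  by rewrite divfK // subrr.
have [c1 /andP[uc1 c1x] dwc1] : exists2 c, u < c < x & dw c = 0.
  apply: (@is_derive_Rolle _ w dw) ux _ _; last by rewrite wu wx.
  by move=> t /andP[ut tx]; apply: Dw; rewrite ut (le_trans tx) ?ltW.
have [c2 /andP[xc2 c2v] dwc2] : exists2 c, x < c < v & dw c = 0.
  apply: (@is_derive_Rolle _ w dw) xv _ _; last by rewrite wv wx.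
  by move=> t /andP[xt tv]; apply: Dw; rewrite tv (le_trans _ xt) ?ltW.
have c1v : c1 < c2 := lt_trans c1x xc2.
have [c /andP[c1c cc2] Kc] : exists2 c, c1 < c < c2 & derive1n 2 f c - 2 * K = 0.
  apply: (@is_derive_Rolle _ dw) c1v _ _; last by rewrite dwc1 dwc2.
  move=> t /andP[c1t tc2]; apply: Ddw.
  by rewrite (le_trans (ltW uc1) c1t) (le_trans tc2 (ltW c2v)).
exists c; first by rewrite (le_trans (ltW uc1)) ?ltW // (lt_trans cc2 c2v).
have -> : derive1n 2 f c = 2 * K by apply/eqP; rewrite -subr_eq0 Kc.
have -> : 2 * K / 2 = K by field.
by rewrite /K divfK.
Qed.

Lemma chord_error f u h x M : 0 <= h -> u <= x <= u + h -> C2_on f u (u + h) ->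
  (forall t, u <= t <= u + h -> `|derive1n 2 f t| <= M) ->
  `|f x - chord f u h x| <= M / 8 * h ^+ 2.
Proof.
move=> h0 /andP[ux xv] fC2 f2M.
have M0 : 0 <= M by apply: le_trans (f2M u _); rewrite ?lexx ?lerDl.
have err0 : 0 <= M / 8 * h ^+ 2 by rewrite mulr_ge0 ?divr_ge0 ?sqr_ge0.
case: (eqVneq x u) => [->|xNu].
  by rewrite /chord subrr mul0r mul0r addr0 subrr normr0.
have ux' : u < x by rewrite lt_neqAle eq_sym xNu.
have h_gt0 : 0 < h by move: (lt_le_trans ux' xv); rewrite ltrDl.
case: (eqVneq x (u + h)) => [->|xNv].
  rewrite /chord [u + h - u]addrC addKr divff ?gt_eqF // mul1r.
  by rewrite [f u + _]addrC subrK subrr normr0.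
have uxv : u < x < u + h by rewrite ux' lt_neqAle xNv.
have [c cuv ->] := chord_error_formula h_gt0 uxv fC2.
have hP : `|(x - u) * (x - (u + h))| <= h ^+ 2 / 4.
  rewrite ler0_norm; last by rewrite mulr_ge0_le0 ?subr_ge0 ?subr_le0.
  rewrite -subr_ge0.
  have -> : h ^+ 2 / 4 - - ((x - u) * (x - (u + h))) = (2 * x - 2 * u - h) ^+ 2 / 4 by field.
  by rewrite divr_ge0 ?sqr_ge0.
have hK : `|derive1n 2 f c / 2| <= M / 2.
  by rewrite normrM normfV normr_nat ler_wpM2r ?invr_ge0 ?f2M.
rewrite normrM; apply: le_trans (ler_pM (normr_ge0 _) (normr_ge0 _) hK hP) _.
by rewrite [leLHS](_ : _ = M / 8 * h ^+ 2) //; field.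
Qed.

End Chord.

Section PiecewiseLinear.
Variable R : realType.
Implicit Types (f : R -> R) (a b x : R) (G : nat).

Lemma pl_interp_cell f a b G x : (2 <= G)%N -> a <= x <= b ->
  let h := (b - a) / (G - 1)%:R in
  exists u, [/\ a <= u, u + h <= b, u <= x <= u + h & pl_interp f a b G x = chord f u h x].
Proof.
move=> G2 /andP[ax xb] h.
set k := minn (G - 2) (Num.truncn ((x - a) / h)); set u := a + k%:R * h.
suff [au uhb uxh] : [/\ a <= u, u + h <= b & u <= x <= u + h] by exists u.
have G1 : 0 < (G - 1)%:R :> R by rewrite ltr0n subn_gt0 (leq_trans _ G2).
have bE : b - a = (G - 1)%:R * h by rewrite /h mulrC divfK ?gt_eqF.
have [h0|hN0] := eqVneq h 0.
  have ba : b = a by apply/eqP; rewrite -subr_eq0 bE h0 mulr0.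
  have xa : x = a by apply/eqP; rewrite eq_le ax -ba xb.
  by rewrite /u h0 mulr0 !addr0 xa ba; split; rewrite /= ?lexx.
have h_gt0 : 0 < h by rewrite lt_neqAle eq_sym hN0 divr_ge0 // subr_ge0 (le_trans ax).
pose t := (x - a) / h.
have t0 : 0 <= t by rewrite divr_ge0 ?subr_ge0 // ltW.
have tE : t * h = x - a by rewrite divfK ?gt_eqF.
have tG : t <= (G - 1)%:R by rewrite -(ler_pM2r h_gt0) tE -bE lerD2r.
have [kt tk1 k1G] : [/\ k%:R <= t, t <= k%:R + 1 & k%:R + 1 <= (G - 1)%:R :> R].
  have /andP[n_le n_lt] := truncn_itv t0.
  rewrite /k -/t; case: (leqP (Num.truncn t) (G - 2)) => hn.
    by split; rewrite // natr1 ?(ltW n_lt) // ler_nat; lia.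
  rewrite natr1 [(G - 2).+1](_ : _ = G - 1)%N; last by lia.
  by rewrite tG lexx (le_trans _ n_le) // ler_nat ltnW.
have kh0 : 0 <= k%:R * h by rewrite mulr_ge0 // ltW.
have := ler_wpM2r (ltW h_gt0) kt; have := ler_wpM2r (ltW h_gt0) tk1.
have := ler_wpM2r (ltW h_gt0) k1G; rewrite tE -bE !mulrDl mul1r /u => *.
by split; try apply/andP; try split; lra.
Qed.

Lemma pl_interp_error f a b G x : (2 <= G)%N -> C2_on f a b -> a <= x <= b ->
  `|f x - pl_interp f a b G x|
    <= supnorm (derive1n 2 f) a b / 8 * ((b - a) / (G - 1)%:R) ^+ 2.
Proof.
move=> G2 fC2 xab; have [u [au uhb uxh ->]] := pl_interp_cell f G2 xab.
apply: chord_error => //; first by case/andP: uxh => ux xuh; lra.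
  exact: C2_on_sub fC2 au uhb.
move=> t /andP[ut th]; apply: (supnorm_ge (C2_on_continuous_derive2 fC2)).
by rewrite (le_trans au ut) (le_trans th uhb).
Qed.

Lemma norm_convex_le (p q th M : R) : 0 <= th <= 1 -> `|p| <= M -> `|q| <= M ->
  `|p + th * (q - p)| <= M.
Proof.
move=> /andP[th0 th1] pM qM.
have -> : p + th * (q - p) = (1 - th) * p + th * q by ring.
apply: le_trans (ler_normD _ _) _.
have th1' : 0 <= 1 - th by rewrite subr_ge0.
rewrite !normrM (ger0_norm th0) (ger0_norm th1').
have := ler_wpM2l th0 qM; have := ler_wpM2l th1' pM; lra.
Qed.

Lemma pl_interp_bound f a b G x : (2 <= G)%N -> {within `[a, b], continuous f} ->
  a <= x <= b -> `|pl_interp f a b G x| <= supnorm f a b.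
Proof.
move=> G2 cf xab; have [u [au uhb /andP[ux xuh] ->]] := pl_interp_cell f G2 xab.
set h := (b - a) / _ in uhb xuh *; have /andP[_ xb] := xab.
apply: norm_convex_le; last 2 first.
- by apply: (supnorm_ge cf); rewrite au (le_trans ux xb).
- by apply: (supnorm_ge cf); rewrite uhb (le_trans au) // (le_trans ux xuh).
have [h_gt0|h_le0] := ltrP 0 h.
  by rewrite ler_pdivrMr // mul1r lerBlDl divr_ge0 ?subr_ge0 // ltW.
have -> : h = 0 by apply/eqP; rewrite eq_le h_le0; lra.
by rewrite invr0 mulr0 lexx ler01.
Qed.
End PiecewiseLinear.

Section SprecherBlock.
Variable R : realType.
Variables (din dout : nat) (lam : 'I_din -> R) (eta alpha tau : R).
Variables (N : 'I_dout -> {set 'I_dout}) (omega : 'I_dout -> 'I_dout -> R).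

Definition mix (g : 'I_dout -> R) (q : 'I_dout) : R :=
  g q + tau * \sum_(j in N q) omega q j * g j.

Definition mix_gain : R :=
  1 + `|tau| * \big[Num.max/0]_(q < dout) \sum_(j in N q) `|omega q j|.

Lemma mixB g1 g2 q : mix g1 q - mix g2 q = mix (fun j => g1 j - g2 j) q.
Proof.
rewrite /mix /=.
have -> : \sum_(j in N q) omega q j * (g1 j - g2 j)
  = \sum_(j in N q) omega q j * g1 j - \sum_(j in N q) omega q j * g2 j.
  by rewrite -sumrB; apply: eq_bigr => j _; rewrite mulrBr.
ring.
Qed.

Lemma mix_gain_ge1 : 1 <= mix_gain.
Proof.
by rewrite lerDl mulr_ge0 // bigmax_ge_id.
Qed.

Lemma norm_mix_le g C q : (forall j, `|g j| <= C) -> `|mix g q| <= mix_gain * C.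
Proof.
move=> gC; have C0 : 0 <= C := le_trans (normr_ge0 _) (gC q).
have sumC : `|\sum_(j in N q) omega q j * g j| <= (\sum_(j in N q) `|omega q j|) * C.
  apply: le_trans (ler_norm_sum _ _ _) _; rewrite big_distrl /=; apply: ler_sum => j _.
  by rewrite normrM ler_wpM2l.
have sum_max : \sum_(j in N q) `|omega q j|
    <= \big[Num.max/0]_(q < dout) \sum_(j in N q) `|omega q j|.
  exact: (le_bigmax _ (fun q => \sum_(j in N q) `|omega q j|)).
apply: le_trans (ler_normD _ _) _; rewrite normrM mulrDl mul1r lerD // -mulrA ler_wpM2l //.
exact: le_trans sumC (ler_wpM2r C0 sum_max).
Qed.

Lemma norm_s_pre_le phi z (q : 'I_dout) M : (forall i, `|phi (z i + eta * (q : nat)%:R)| <= M) ->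
  `|s_pre phi lam eta alpha z q| <= l1norm lam * M + `|alpha| * (dout - 1)%:R.
Proof.
move=> phiM; apply: le_trans (ler_normD _ _) _; apply: lerD.
  apply: le_trans (ler_norm_sum _ _ _) _; rewrite /l1norm big_distrl /=.
  by apply: ler_sum => i _; rewrite normrM ler_wpM2l.
by rewrite normrM normr_nat ler_wpM2l // ler_nat; have := ltn_ord q; lia.
Qed.

Lemma norm_s_preB_le phi psi z (q : 'I_dout) d :
  (forall i, `|phi (z i + eta * (q : nat)%:R) - psi (z i + eta * (q : nat)%:R)| <= d) ->
  `|s_pre phi lam eta alpha z q - s_pre psi lam eta alpha z q| <= l1norm lam * d.
Proof.
move=> phid; rewrite /s_pre opprD addrACA subrr addr0 -sumrB.
apply: le_trans (ler_norm_sum _ _ _) _; rewrite /l1norm big_distrl /=.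
by apply: ler_sum => i _; rewrite -mulrBr normrM ler_wpM2l.
Qed.

Lemma Tblock_error phi psi Phi Psi z M d L e :
  let c := mix_gain * (l1norm lam * M + `|alpha| * (dout - 1)%:R) in
  (forall (q : 'I_dout) i, `|phi (z i + eta * (q : nat)%:R)| <= M) ->
  (forall (q : 'I_dout) i, `|psi (z i + eta * (q : nat)%:R)| <= M) ->
  (forall (q : 'I_dout) i,
     `|phi (z i + eta * (q : nat)%:R) - psi (z i + eta * (q : nat)%:R)| <= d) ->
  (forall s t, `|s| <= c -> `|t| <= c -> `|Phi s - Phi t| <= L * `|s - t|) ->
  (forall s, `|s| <= c -> `|Phi s - Psi s| <= e) -> 0 <= L ->
  forall q, `|Tblock phi Phi lam eta alpha tau N omega z q
              - Tblock psi Psi lam eta alpha tau N omega z q|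
            <= L * mix_gain * l1norm lam * d + e.
Proof.
move=> c phiM psiM phid PhiL PsiE L0 q.
pose g1 := s_pre (dout := dout) phi lam eta alpha z.
pose g2 := s_pre (dout := dout) psi lam eta alpha z.
have s1c : `|mix g1 q| <= c by apply: norm_mix_le => j; exact: norm_s_pre_le.
have s2c : `|mix g2 q| <= c by apply: norm_mix_le => j; exact: norm_s_pre_le.
have s12 : `|mix g1 q - mix g2 q| <= mix_gain * (l1norm lam * d).
  by rewrite mixB; apply: norm_mix_le => j; exact: norm_s_preB_le.
rewrite /Tblock -/(mix g1 q) -/(mix g2 q).
rewrite (_ : Phi _ - Psi _ = Phi (mix g1 q) - Phi (mix g2 q) + (Phi (mix g2 q) - Psi (mix g2 q)));
  last by ring.
apply: le_trans (ler_normD _ _) _; rewrite lerD ?PsiE //.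
by apply: le_trans (PhiL _ _ s1c s2c) _; rewrite -!mulrA ler_wpM2l.
Qed.

End SprecherBlock.

Theorem mainTheorem2 (R : realType) (din dout : nat)
  (hdin : (1 <= din)%N) (hdout : (1 <= dout)%N)
  (lam : 'I_din -> R) (eta alpha tau : R)
  (N : 'I_dout -> {set 'I_dout}) (omega : 'I_dout -> 'I_dout -> R)
  (Bin : R) (hBin : 0 < Bin)
  (phi Phi : R -> R) (Gphi GPhi : nat)
  (hGphi : (2 <= Gphi)%N) (hGPhi : (2 <= GPhi)%N)
  (Rres : ('I_din -> R) -> ('I_dout -> R)) :
  let aphi := - Bin - `|eta| * (dout - 1)%:R in
  let bphi := Bin + `|eta| * (dout - 1)%:R in
  let Mphi := supnorm phi aphi bphi in
  let Bomega := \big[Num.max/0]_(q < dout) \sum_(j in N q) `|omega q j| in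
  let Rmix := 1 + `|tau| * Bomega in
  let Ms := l1norm lam * Mphi + `|alpha| * (dout - 1)%:R in
  let aPhi := - (Rmix * Ms) in
  let bPhi := Rmix * Ms in
  C2_near phi aphi bphi ->
  C2_near Phi aPhi bPhi ->
  let phih := pl_interp phi aphi bphi Gphi in
  let Phih := pl_interp Phi aPhi bPhi GPhi in
  let T := Tblock phi Phi lam eta alpha tau N omega in
  let Th := Tblock phih Phih lam eta alpha tau N omega in
  let hphi := (bphi - aphi) / (Gphi - 1)%:R in
  let hPhi := (bPhi - aPhi) / (GPhi - 1)%:R in
  let Mphi2 := supnorm (derive1n 2 phi) aphi bphi in
  let MPhi2 := supnorm (derive1n 2 Phi) aPhi bPhi in
  let LPhi := supnorm (derive1 Phi) aPhi bPhi in
  let dphi := Mphi2 / 8 * hphi ^+ 2 in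
  let dPhi := MPhi2 / 8 * hPhi ^+ 2 in
  let KT := (LPhi * Rmix * l1norm lam * Mphi2 + MPhi2) / 8 in
  forall z : 'I_din -> R, (forall i, `|z i| <= Bin) ->
    [/\ infnorm (fun q => T z q - Th z q) <= LPhi * Rmix * l1norm lam * dphi + dPhi,
        LPhi * Rmix * l1norm lam * dphi + dPhi <= KT * Num.max (hphi ^+ 2) (hPhi ^+ 2),
        infnorm (fun q => (T z q + Rres z q) - (Th z q + Rres z q))
          <= LPhi * Rmix * l1norm lam * dphi + dPhi
      & LPhi * Rmix * l1norm lam * dphi + dPhi <= KT * Num.max (hphi ^+ 2) (hPhi ^+ 2)].
Proof.
move=> aphi bphi Mphi Bomega Rmix Ms aPhi bPhi /C2_near_on phiC2 /C2_near_on PhiC2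
  phih Phih T Th hphi hPhi Mphi2 MPhi2 LPhi dphi dPhi KT z zB.
have in_phi q i : aphi <= z i + eta * (q : 'I_dout)%:R <= bphi.
  exact: shift_mem_itv (zB i) (ltn_ord q).
have ab_phi : aphi <= bphi.
  by have /andP[] := in_phi (Ordinal hdout) (Ordinal hdin); exact: le_trans.
have cphi := C2_on_continuous phiC2.
have Rmix1 : 1 <= Rmix := mix_gain_ge1 tau N omega.
have Ms0 : 0 <= Ms by rewrite addr_ge0 ?mulr_ge0 ?l1norm_ge0 ?(supnorm_ge0 ab_phi).
have ab_Phi : aPhi <= bPhi by rewrite /aPhi /bPhi; have := mulr_ge0 (le_trans ler01 Rmix1) Ms0; lra.
have in_Phi s : `|s| <= Rmix * Ms -> aPhi <= s <= bPhi by rewrite ler_norml.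
have LPhi0 : 0 <= LPhi := supnorm_ge0 ab_Phi (C2_on_continuous_derive1 PhiC2).
have err q : `|T z q - Th z q| <= LPhi * Rmix * l1norm lam * dphi + dPhi.
  apply: (Tblock_error (M := Mphi)) => // [q' i|q' i|q' i|s t /in_Phi sI /in_Phi tI|s /in_Phi sI].
  - exact/(supnorm_ge cphi)/in_phi.
  - exact/(pl_interp_bound hGphi cphi)/in_phi.
  - exact/(pl_interp_error hGphi phiC2)/in_phi.
  - apply: lipschitz_supnorm_derive1 sI tI; last exact: C2_on_continuous_derive1 PhiC2.
    by move=> x /PhiC2 [].
  - exact: pl_interp_error hGPhi PhiC2 sI.
have KT_bound : LPhi * Rmix * l1norm lam * dphi + dPhi <= KT * Num.max (hphi ^+ 2) (hPhi ^+ 2).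
  apply: interp_err_sum_le_max.
  - by rewrite !mulr_ge0 ?l1norm_ge0 ?(le_trans ler01 Rmix1).
  - exact: supnorm_ge0 ab_phi (C2_on_continuous_derive2 phiC2).
  - exact: supnorm_ge0 ab_Phi (C2_on_continuous_derive2 PhiC2).
have -> : (fun q => T z q + Rres z q - (Th z q + Rres z q)) = (fun q => T z q - Th z q).
  by apply/funext => q; ring.
by split => //; exact: infnorm_le.
Qed.
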